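(* Let $P=(p_1,\dots,p_S)$ be a fixed probability distribution on $\{1,\dots,S\}$, let $\hat P_n=(N_1/n,\dots,N_S/n)$ be the empirical distribution of $n$ i.i.d. samples from $P$, where $N_k$ is the number of samples equal to $k$. Then, as $n\to\infty$, $$\mathbb E\big[(Q(P)-Q(\hat P_n))^2\big]=\mathcal O\Big(\frac{\log^4 n}{n}\Big).$$
   Context: For a probability vector $P=(p_1,\dots,p_S)$, $Q(P)=\sum_{k=1}^S p_k\log^2(p_k)$, with the convention $0\log^2 0=0$. *)

From HB Require Import structures.
From mathcomp Require Import all_boot all_order all_algebra.
From mathcomp Require Import all_classical all_reals all_analysis.
Set Implicit Arguments. Unset Strict Implicit. Unset Printing Implicit Defensive.
Import Order.TTheory GRing.Theory Num.Theory.
Local Open Scope ring_scope.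

Definition Qfun (R : realType) (S : nat) (P : 'I_S -> R) : R :=
  \sum_(k < S) (if P k == 0 then 0 else P k * (ln (P k)) ^+ 2).

Definition prob_vec (R : realType) (S : nat) (P : 'I_S -> R) : Prop :=
  (forall k, 0 <= P k) /\ \sum_(k < S) P k = 1.

Definition empirical (R : realType) (S n : nat) (s : {ffun 'I_n -> 'I_S})
  : 'I_S -> R :=
  fun k => #|[set i | s i == k]|%:R / n%:R.

(* E[(Q(P) - Q(hat P_n))^2] for n i.i.d. samples from P: the expectation is
   the sum over all sample sequences weighted by their product probability. *)
Definition mse_Q (R : realType) (S : nat) (P : 'I_S -> R) (n : nat) : R :=
  \sum_(s : {ffun 'I_n -> 'I_S})
     (\prod_(i < n) P (s i)) * (Qfun P - Qfun (empirical R s)) ^+ 2.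

(* With g x = x ln^2 x we have Q(P) - Q(hat P) = sum_k (g p_k - g (hat p_k)).
   On [0, a] the function g is at most 2a(4 + ln^2 a), and on [a, 1] it is
   Lipschitz with constant ln^2 a - 2 ln a; splitting at a = 1/n gives
   (g x - g y)^2 <= 800 ln^4 n ((x - y)^2 + 1/n^2) for x, y in [0, 1].
   Cauchy-Schwarz over the S coordinates reduces the mean squared error to the
   variances E[(p_k - hat p_k)^2] = p_k (1 - p_k) / n <= 1/n. *)

From HB Require Import structures.
From mathcomp Require Import all_boot all_order all_algebra.
From mathcomp Require Import all_classical all_reals all_analysis.
From mathcomp Require Import ring lra.
Set Implicit Arguments. Unset Strict Implicit. Unset Printing Implicit Defensive.
Import Order.TTheory GRing.Theory Num.Theory.
Local Open Scope ring_scope.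

Lemma sqr_sum_le (R : realDomainType) (I : finType) (a : I -> R) :
  (\sum_i a i) ^+ 2 <= #|I|%:R * \sum_i a i ^+ 2.
Proof.
set T := \sum_i a i ^+ 2.
have sum_sqr_ge0 : 0 <= \sum_i \sum_j (a i - a j) ^+ 2.
  by apply: sumr_ge0 => i _; apply: sumr_ge0 => j _; rewrite sqr_ge0.
have expand : \sum_i \sum_j (a i - a j) ^+ 2
    = \sum_i \sum_(j : I) a i ^+ 2 + \sum_(i : I) \sum_j a j ^+ 2
      - 2 * \sum_i \sum_j a i * a j.
  rewrite mulr_sumr -big_split -sumrB; apply: eq_bigr => i _.
  rewrite mulr_sumr -big_split -sumrB; apply: eq_bigr => j _ /=; ring.
have diag1 : \sum_i \sum_(j : I) a i ^+ 2 = #|I|%:R * T.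
  by rewrite /T mulr_sumr; apply: eq_bigr => i _; rewrite sumr_const mulr_natl.
have diag2 : \sum_(i : I) \sum_j a j ^+ 2 = #|I|%:R * T.
  by rewrite sumr_const mulr_natl.
have cross : \sum_i \sum_j a i * a j = (\sum_i a i) ^+ 2.
  by rewrite expr2 big_distrlr.
rewrite expand diag1 diag2 cross in sum_sqr_ge0; lra.
Qed.

Section XLn2.
Variable R : realType.
Implicit Types a x y : R.

Definition xln2 x : R := if x == 0 then 0 else x * ln x ^+ 2.

Lemma ln_le_subr1 x : 0 < x -> ln x <= x - 1.
Proof.
move=> x_gt0; have -> : x = 1 + (x - 1) by ring.
rewrite addrAC subrr add0r le_ln1Dx //; lra.
Qed.

Lemma mulr_Nln_ge0_le1 x : 0 < x -> x <= 1 -> 0 <= x * - ln x <= 1.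
Proof.
move=> x_gt0 x_le1.
rewrite mulr_ge0 ?oppr_ge0 ?ln_le0 ?(ltW x_gt0) //= -lnV ?posrE //.
have /ln_sublinear/ltW lnV_le : 0 < x^-1 by rewrite invr_gt0.
by rewrite -(mulfV (lt0r_neq0 x_gt0)) ler_wpM2l // ltW.
Qed.

(* Writing x = s^2, x ln^2 x = 4 (s ln s)^2 and |s ln s| <= 1. *)
Lemma xln2_le4 x : 0 < x -> x <= 1 -> x * ln x ^+ 2 <= 4.
Proof.
move=> x_gt0 x_le1; set s := Num.sqrt x.
have s_gt0 : 0 < s by rewrite sqrtr_gt0.
have ssx : s * s = x by rewrite -expr2 sqr_sqrtr // ltW.
have s_le1 : s <= 1 by rewrite -sqrtr1 ler_sqrt.
have /andP[sNln_ge0 sNln_le1] := mulr_Nln_ge0_le1 s_gt0 s_le1.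
rewrite -ssx lnM ?posrE //.
have -> : s * s * (ln s + ln s) ^+ 2 = 4 * (s * - ln s) ^+ 2 by ring.
have : (s * - ln s) ^+ 2 <= 1 by rewrite expr2; nra.
lra.
Qed.

Lemma xln2_small a x : 0 < a -> 0 <= x -> x <= a ->
  0 <= xln2 x <= 2 * a * (4 + ln a ^+ 2).
Proof.
move=> a_gt0 x_ge0 x_le_a.
have bound_ge0 : 0 <= 2 * a * (4 + ln a ^+ 2).
  by rewrite !mulr_ge0 ?addr_ge0 ?sqr_ge0 ?ltW.
rewrite /xln2; case: ifP => [_|/negbT x_neq0]; first by rewrite lexx.
have x_gt0 : 0 < x by rewrite lt0r x_neq0.
set t := x / a.
have t_gt0 : 0 < t by rewrite divr_gt0.
have t_le1 : t <= 1 by rewrite ler_pdivrMr // mul1r.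
have xE : x = t * a by rewrite /t mulfVK // lt0r_neq0.
apply/andP; split; first by rewrite mulr_ge0 ?sqr_ge0 // ltW.
have := xln2_le4 t_gt0 t_le1.
rewrite xE lnM ?posrE //.
set u := ln t; set v := ln a => tu.
have tv : t * v ^+ 2 <= v ^+ 2 by rewrite ler_piMl // sqr_ge0.
have : t * (u + v) ^+ 2 <= 2 * (t * u ^+ 2 + t * v ^+ 2).
  have : 0 <= t * (u - v) ^+ 2 by rewrite mulr_ge0 ?sqr_ge0 ?ltW.
  rewrite !expr2; nra.
have -> : t * a * (u + v) ^+ 2 = a * (t * (u + v) ^+ 2) by ring.
nra.
Qed.

Lemma xln2_lipschitz a x y : 0 < a -> a <= x <= 1 -> a <= y <= 1 ->
  `|xln2 x - xln2 y| <= `|x - y| * (ln a ^+ 2 - 2 * ln a).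
Proof.
move=> a_gt0; wlog xy : x y / x <= y => [hwlog hx hy|].
  have [xy|/ltW xy] := leP x y; first exact: hwlog.
  by rewrite distrC [`|x - y|]distrC hwlog.
move=> /andP[ax _] /andP[_ y_le1].
have x_gt0 : 0 < x by apply: lt_le_trans ax.
have y_gt0 : 0 < y by apply: lt_le_trans xy.
rewrite /xln2 (negbTE (lt0r_neq0 x_gt0)) (negbTE (lt0r_neq0 y_gt0)).
have -> : `|x - y| = y - x by rewrite distrC ger0_norm // subr_ge0.
rewrite distrC.
set L := ln a; set lx := ln x; set ly := ln y.
have L_le_lx : L <= lx by rewrite ler_ln ?posrE.
have lx_le_ly : lx <= ly by rewrite ler_ln ?posrE.
have ly_le0 : ly <= 0 by rewrite ln_le0.
set d := y - x; set e := x * (ly - lx).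
have e_le_d : e <= d.
  rewrite /e /lx /ly -ln_div ?posrE //.
  have -> : d = x * (y / x - 1) by rewrite mulrBr mulr1 mulrC mulfVK // lt0r_neq0.
  by rewrite ler_wpM2l ?ln_le_subr1 ?divr_gt0 // ltW.
have e_ge0 : 0 <= e by rewrite mulr_ge0 ?subr_ge0 // ltW.
have -> : y * ly ^+ 2 - x * lx ^+ 2 = d * ly ^+ 2 + e * (ly + lx) by rewrite /d /e; ring.
have d_ge0 : 0 <= d by rewrite subr_ge0.
have sqr_part : 0 <= d * ly ^+ 2 <= d * L ^+ 2.
  by rewrite mulr_ge0 ?sqr_ge0 //= ler_wpM2l //; nra.
have cross_part : `|e * (ly + lx)| <= - 2 * L * d.
  rewrite normrM ger0_norm // ler0_norm; last by lra.
  have : 0 <= e * (- 2 * L + (ly + lx)) by rewrite mulr_ge0 //; lra.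
  have : 0 <= (d - e) * (- 2 * L) by rewrite mulr_ge0 //; lra.
  nra.
case/andP: sqr_part => dly2_ge0 dly2_le.
apply: le_trans (ler_normD _ _) _; rewrite ger0_norm //; lra.
Qed.

Lemma xln2_dist a x y : 0 < a -> ln a <= -1 -> 0 <= x <= 1 -> 0 <= y <= 1 ->
  `|xln2 x - xln2 y| <= 20 * ln a ^+ 2 * (`|x - y| + a).
Proof.
move=> a_gt0 lna_le; wlog xy : x y / x <= y => [hwlog hx hy|].
  have [xy|/ltW xy] := leP x y; first exact: hwlog.
  by rewrite distrC [`|x - y|]distrC hwlog.
move=> /andP[x_ge0 x_le1] /andP[y_ge0 y_le1].
set L := ln a; rewrite -/L in lna_le.
have a_le1 : a <= 1.
  by rewrite leNgt; apply/negP => /ln_gt0; rewrite -/L => ?; lra.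
have L2_ge1 : 1 <= L ^+ 2.
  have : 0 <= (- L - 1) * (1 - L) by rewrite mulr_ge0 //; lra.
  rewrite expr2; nra.
have small_le : 2 * a * (4 + L ^+ 2) <= 10 * L ^+ 2 * a by nra.
have lip_le : L ^+ 2 - 2 * L <= 3 * L ^+ 2 by nra.
have near0 (u v : R) : 0 <= u <= 2 * a * (4 + L ^+ 2) -> 0 <= v <= 2 * a * (4 + L ^+ 2) ->
    `|u - v| <= 10 * L ^+ 2 * a.
  move=> /andP[? ?] /andP[? ?]; rewrite ler_norml; apply/andP; split; lra.
have L2_ge0 : 0 <= L ^+ 2 by rewrite sqr_ge0.
have lip_scale (u : R) : 0 <= u -> u * (L ^+ 2 - 2 * L) <= 3 * L ^+ 2 * u by nra.
have dist_of_le (u v : R) : u <= v -> `|u - v| = v - u.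
  by move=> uv; rewrite distrC ger0_norm // subr_ge0.
rewrite [`|x - y|]dist_of_le //.
have small_a := xln2_small a_gt0 (ltW a_gt0) (lexx a).
case: (lerP y a) => [ya | ay]; last case: (lerP x a) => [xa | ax].
- have := near0 _ _ (xln2_small a_gt0 x_ge0 (le_trans xy ya)) (xln2_small a_gt0 y_ge0 ya).
  have : 0 <= L ^+ 2 * (y - x) by rewrite mulr_ge0 // subr_ge0.
  nra.
- have gx_ga := near0 _ _ (xln2_small a_gt0 x_ge0 xa) small_a.
  have a_in : a <= a <= 1 by rewrite lexx a_le1.
  have y_in : a <= y <= 1 by rewrite y_le1 ltW.
  have := xln2_lipschitz a_gt0 a_in y_in; rewrite [`|a - y|]dist_of_le ?(ltW ay) // => ga_gy.
  have := ler_distD (xln2 a) (xln2 x) (xln2 y).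
  have ya_ge0 : 0 <= y - a by rewrite subr_ge0 ltW.
  have := lip_scale _ ya_ge0.
  rewrite -/L in gx_ga ga_gy *; nra.
- have x_in : a <= x <= 1 by rewrite x_le1 ltW.
  have y_in : a <= y <= 1 by rewrite y_le1 ltW // (lt_le_trans ax xy).
  have := xln2_lipschitz a_gt0 x_in y_in; rewrite [`|x - y|]dist_of_le //.
  have xy_ge0 : 0 <= y - x by rewrite subr_ge0.
  have := lip_scale _ xy_ge0.
  have : 0 <= L ^+ 2 * a by rewrite mulr_ge0 // ltW.
  rewrite -/L; nra.
Qed.

Lemma xln2_dist_sqr a x y : 0 < a -> ln a <= -1 -> 0 <= x <= 1 -> 0 <= y <= 1 ->
  (xln2 x - xln2 y) ^+ 2 <= 800 * ln a ^+ 4 * ((x - y) ^+ 2 + a ^+ 2).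
Proof.
move=> a_gt0 lna_le hx hy; have := xln2_dist a_gt0 lna_le hx hy.
rewrite -(real_normK (num_real (xln2 x - xln2 y))) -(real_normK (num_real (x - y))).
set u := `|_ - _|; set v := `|x - y|; set A := 20 * ln a ^+ 2 => u_le.
have u_ge0 : 0 <= u by apply: normr_ge0.
have v_ge0 : 0 <= v by apply: normr_ge0.
have A_ge0 : 0 <= A by rewrite mulr_ge0 ?sqr_ge0.
have -> : 800 * ln a ^+ 4 = 2 * A ^+ 2 by rewrite /A; ring.
have : u ^+ 2 <= (A * (v + a)) ^+ 2.
  by rewrite ler_sqr ?nnegrE // mulr_ge0 // addr_ge0 // ltW.
have : 0 <= A ^+ 2 * (v - a) ^+ 2 by rewrite mulr_ge0 ?sqr_ge0.
rewrite !expr2; nra.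
Qed.

End XLn2.

Lemma sqr_Qfun_sub_le (R : realType) (S : nat) (P P' : 'I_S -> R) (a : R) :
  0 < a -> ln a <= -1 -> (forall k, 0 <= P k <= 1) -> (forall k, 0 <= P' k <= 1) ->
  (Qfun P - Qfun P') ^+ 2
    <= S%:R * \sum_k 800 * ln a ^+ 4 * ((P k - P' k) ^+ 2 + a ^+ 2).
Proof.
move=> a_gt0 lna_le P01 P'01.
rewrite /Qfun -sumrB; apply: le_trans (sqr_sum_le _) _.
rewrite card_ord ler_wpM2l ?ler0n //; apply: ler_sum => k _.
exact: xln2_dist_sqr.
Qed.

Lemma prob_vec_le1 (R : realType) (S : nat) (P : 'I_S -> R) (k : 'I_S) :
  prob_vec P -> P k <= 1.
Proof. by case=> P_ge0 <-; rewrite (bigD1 k) //= lerDl sumr_ge0. Qed.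

Section IidSamples.
Variables (R : realType) (S : nat) (P : 'I_S -> R).
Hypothesis P_prob : prob_vec P.

Definition iid_expect n (X : {ffun 'I_n -> 'I_S} -> R) : R :=
  \sum_(s : {ffun 'I_n -> 'I_S}) (\prod_(i < n) P (s i)) * X s.

Lemma eq_iid_expect n (X Y : {ffun 'I_n -> 'I_S} -> R) :
  (forall s, X s = Y s) -> iid_expect X = iid_expect Y.
Proof. by move=> XY; apply: eq_bigr => s _; rewrite XY. Qed.

Lemma ler_iid_expect n (X Y : {ffun 'I_n -> 'I_S} -> R) :
  (forall s, X s <= Y s) -> iid_expect X <= iid_expect Y.
Proof.
move=> XY; apply: ler_sum => s _; rewrite ler_wpM2l //.
by apply: prodr_ge0 => i _; apply: P_prob.1.
Qed.

Lemma iid_expectD n (X Y : {ffun 'I_n -> 'I_S} -> R) :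
  iid_expect (fun s => X s + Y s) = iid_expect X + iid_expect Y.
Proof. by rewrite /iid_expect -big_split; apply: eq_bigr => s _; rewrite mulrDr. Qed.

Lemma iid_expectZ n c (X : {ffun 'I_n -> 'I_S} -> R) :
  iid_expect (fun s => c * X s) = c * iid_expect X.
Proof. by rewrite /iid_expect mulr_sumr; apply: eq_bigr => s _; rewrite mulrCA. Qed.

Lemma iid_expect_sum n (I : finType) (X : I -> {ffun 'I_n -> 'I_S} -> R) :
  iid_expect (fun s => \sum_i X i s) = \sum_i iid_expect (X i).
Proof.
rewrite /iid_expect exchange_big /=; apply: eq_bigr => s _.
by rewrite mulr_sumr.
Qed.

Lemma iid_expect_prod n (F : 'I_n -> 'I_S -> R) :
  iid_expect (fun s => \prod_i F i (s i)) = \prod_i \sum_t P t * F i t.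
Proof.
by rewrite /iid_expect bigA_distr_bigA; apply: eq_bigr => s _; rewrite -big_split.
Qed.

Lemma iid_expect_cst n c : iid_expect (fun _ : {ffun 'I_n -> 'I_S} => c) = c.
Proof.
have mass : iid_expect (fun s : {ffun 'I_n -> 'I_S} => \prod_(i < n) 1) = 1.
  rewrite (iid_expect_prod (fun _ _ => 1)) big1 // => i _.
  by under eq_bigr do rewrite mulr1; rewrite P_prob.2.
rewrite -[RHS]mulr1 -[in RHS]mass -iid_expectZ.
by apply: eq_iid_expect => s; rewrite big1_eq mulr1.
Qed.

Lemma iid_expect_mul_le n (f : 'I_S -> R) (i j : 'I_n) :
  \sum_t P t * f t = 0 -> (forall t, f t ^+ 2 <= 1) ->
  iid_expect (fun s => f (s i) * f (s j)) <= (i == j)%:R.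
Proof.
move=> f_centred f_le1.
have -> : iid_expect (fun s => f (s i) * f (s j)) = \prod_l \sum_t P t *
    ((if l == i then f t else 1) * (if l == j then f t else 1)).
  rewrite -iid_expect_prod; apply: eq_iid_expect => s.
  by rewrite big_split /= -!big_mkcond !big_pred1_eq.
rewrite (bigD1 i) //= eqxx; case: (eqVneq i j) => [<-|ij] /=.
  rewrite [X in _ * X]big1 ?mulr1 => [|l /negbTE ->]; last first.
    by under eq_bigr do rewrite !mulr1; rewrite P_prob.2.
  rewrite -P_prob.2; apply: ler_sum => t _.
  by rewrite -expr2 ler_piMr ?P_prob.1.
by under eq_bigr do rewrite !mulr1; rewrite f_centred mul0r.
Qed.

Lemma iid_expect_mean_sqr n (f : 'I_S -> R) :
  \sum_t P t * f t = 0 -> (forall t, f t ^+ 2 <= 1) ->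
  iid_expect (fun s : {ffun 'I_n -> 'I_S} => (n%:R^-1 * \sum_i f (s i)) ^+ 2)
    <= n%:R^-1.
Proof.
move=> f_centred f_le1.
under eq_iid_expect do rewrite exprMn [X in _ * X]expr2 big_distrlr /=.
rewrite iid_expectZ iid_expect_sum; under eq_bigr do rewrite iid_expect_sum.
apply: le_trans (_ : n%:R^-1 ^+ 2 * \sum_(i < n) \sum_(j < n) (i == j)%:R <= _).
  rewrite ler_wpM2l ?exprn_ge0 ?invr_ge0 ?ler0n //.
  by do 2!apply: ler_sum => ? _; apply: iid_expect_mul_le.
have -> : \sum_(i < n) \sum_(j < n) ((i == j)%:R : R) = n%:R.
  rewrite -[n in RHS]card_ord -sumr_const; apply: eq_bigr => i _.
  by rewrite (bigD1 i) //= eqxx big1 ?addr0 // => j; rewrite eq_sym => /negbTE ->.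
rewrite expr2 -mulrA; have [->|n_neq0] := eqVneq (n%:R : R) 0.
  by rewrite invr0 !mul0r.
by rewrite mulVf ?mulr1.
Qed.

Lemma empirical_ge0_le1 n (s : {ffun 'I_n -> 'I_S}) k : 0 <= empirical R s k <= 1.
Proof.
rewrite /empirical divr_ge0 //=; case: n s => [|n] s; first by rewrite invr0 mulr0.
rewrite ler_pdivrMr ?ltr0n // mul1r ler_nat.
by rewrite -[X in (_ <= X)%N]card_ord max_card.
Qed.

Lemma empirical_subE n (s : {ffun 'I_n -> 'I_S}) k : (0 < n)%N ->
  empirical R s k - P k = n%:R^-1 * \sum_i ((s i == k)%:R - P k).
Proof.
move=> n_gt0; have n_neq0 : (n%:R : R) != 0 by rewrite pnatr_eq0 -lt0n.
have countE : (#|[set i | s i == k]|%:R : R) = \sum_i ((s i == k)%:R : R).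
  rewrite -sum1dep_card natr_sum big_mkcond /=; apply: eq_bigr => i _.
  by case: (s i == k).
rewrite /empirical sumrB sumr_const card_ord -countE mulrBr -mulr_natr.
by field.
Qed.

Lemma iid_expect_empirical_sqr n k : (0 < n)%N ->
  iid_expect (fun s : {ffun 'I_n -> 'I_S} => (P k - empirical R s k) ^+ 2) <= n%:R^-1.
Proof.
move=> n_gt0; under eq_iid_expect do rewrite -sqrrN opprB empirical_subE //.
apply: (@iid_expect_mean_sqr n (fun t => (t == k)%:R - P k)) => [|t].
  under eq_bigr do rewrite mulrBr; rewrite sumrB -mulr_suml P_prob.2 mul1r.
  rewrite (bigD1 k) //= eqxx mulr1 big1 ?addr0 ?subrr // => t /negbTE ->.
  by rewrite mulr0.
have := P_prob.1 k; have := prob_vec_le1 k P_prob.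
by case: (t == k) => /= ? ?; rewrite expr2; nra.
Qed.

End IidSamples.

Lemma ln_nat_ge1 (R : realType) (n : nat) :
  ((Num.truncn (expR 1 : R)).+1 <= n)%N -> 1 <= ln (n%:R : R).
Proof.
move=> hn; rewrite -[X in X <= _](expRK 1) ler_ln ?posrE ?expR_gt0 //.
  apply: ltW (lt_le_trans (truncnS_gt _) _); rewrite ler_nat //.
by rewrite ltr0n (leq_trans _ hn).
Qed.

Theorem mainTheorem5 (R : realType) (S : nat) (P : 'I_S -> R) :
  prob_vec P ->
  exists (C : R) (N : nat), forall n : nat, (N <= n)%N ->
    mse_Q P n <= C * (ln (n%:R : R)) ^+ 4 / n%:R.
Proof.
move=> hP.
exists (1600 * S%:R ^+ 2), (Num.truncn (expR 1 : R)).+1 => n hn.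
have n_gt0 : (0 < n)%N by apply: leq_trans hn.
set c := (n%:R : R)^-1.
have c_gt0 : 0 < c by rewrite invr_gt0 ltr0n.
have c_le1 : c <= 1 by rewrite invf_le1 ?ltr0n // ler1n.
have lnc : ln c = - ln n%:R by rewrite lnV ?posrE ?ltr0n.
have lnc_le : ln c <= -1 by rewrite lnc lerN2 ln_nat_ge1.
have P01 k : 0 <= P k <= 1 by rewrite hP.1 prob_vec_le1.
rewrite /mse_Q -/(iid_expect P _).
apply: le_trans (ler_iid_expect hP (fun s =>
  sqr_Qfun_sub_le c_gt0 lnc_le P01 (empirical_ge0_le1 R s))) _.
rewrite iid_expectZ iid_expect_sum.
under eq_bigr do rewrite iid_expectZ iid_expectD (iid_expect_cst hP).
apply: le_trans (_ : S%:R * \sum_(k < S) 800 * ln c ^+ 4 * (c + c) <= _).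
  rewrite ler_wpM2l ?ler0n //; apply: ler_sum => k _.
  have coef_ge0 : 0 <= 800 * ln c ^+ 4 by rewrite mulr_ge0 ?ler0n ?exprn_even_ge0.
  rewrite ler_wpM2l // lerD ?iid_expect_empirical_sqr //.
  by rewrite expr2 ler_piMl // ltW.
rewrite sumr_const card_ord lnc.
have -> : S%:R * (800 * (- ln n%:R) ^+ 4 * (c + c) *+ S)
    = 1600 * S%:R ^+ 2 * ln (n%:R : R) ^+ 4 / n%:R by rewrite /c; ring.
exact: lexx.
Qed.
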